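(* Let $x_1,\dots,x_n$ be independent Bernoulli random variables, $p_i=\mathbb{E}x_i$ and $\bar p=\frac1n\sum_{i=1}^np_i$. For any $r>0$, $\varepsilon>0$, $\delta\in(0,1)$ and $q\in[0,1]$ with $|q-\bar p|\le r$, with probability at least $1-\delta$, $$\frac1n\sum_{i=1}^nx_i-\bar p<\varepsilon r+\sqrt{\frac{2q(1-q)\log(1/\delta)}{n}}+\Big(\frac23+\frac1{2\varepsilon}\Big)\frac{\log(1/\delta)}{n}.$$ The same upper bound also holds for $\bar p-\frac1n\sum_{i=1}^nx_i$ with probability at least $1-\delta$. *)

From HB Require Import structures.
From mathcomp Require Import all_boot all_order all_algebra.
From mathcomp Require Import all_classical all_reals all_analysis.
Set Implicit Arguments. Unset Strict Implicit. Unset Printing Implicit Defensive.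
Import Order.TTheory GRing.Theory Num.Theory.
Local Open Scope classical_set_scope.
Local Open Scope ring_scope.

(* Mutual independence of the finite family X_0, ..., X_{n-1} of real random
   variables: for all Borel sets B_0, ..., B_{n-1},
   P(X_0 \in B_0, ..., X_{n-1} \in B_{n-1}) = prod_i P(X_i \in B_i).
   (Taking B_i = setT recovers the product rule for every subfamily.) *)
Definition mutually_independent d (T : measurableType d) (R : realType)
  (P : probability T R) (n : nat) (X : 'I_n -> {RV P >-> R}) : Prop :=
  forall B : 'I_n -> set R, (forall i, measurable (B i)) ->
    P (\big[setI/setT]_(i < n) (X i @^-1` B i)) =
    (\prod_(i < n) P (X i @^-1` B i))%E.

Definition bernoulli_rv d (T : measurableType d) (R : realType)
  (P : probability T R) (X : {RV P >-> R}) : Prop :=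
  P [set w | X w = 0 \/ X w = 1] = 1%E.

From HB Require Import structures.
From mathcomp Require Import all_boot all_order all_algebra.
From mathcomp Require Import all_classical all_reals all_analysis.
From mathcomp Require Import measurable_realfun ring lra.
Import Order.TTheory GRing.Theory Num.Theory.
Local Open Scope classical_set_scope.
Local Open Scope ring_scope.

(* For 0 <= lam < 3 and x <= lam,
   e^x <= 1 + x + x^2 / (2 (1 - lam/3)), so a centred Bernoulli(p) variable
   has moment generating function at most exp (psi(lam) p (1 - p)) with
   psi(lam) = lam^2 / (2 (1 - lam/3)). As the x_i are almost surely
   {0,1}-valued, the tail probability is a finite sum over the atoms
   {x = b}, on which independence factorises the Chernoff bound; at the best
   lam, a total variance V and a level L = log(1/delta) give the deviation
   sqrt(2 V L) + 2 L / 3. Concavity of p(1 - p) gives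
   V <= n pbar (1 - pbar) <= n (q (1 - q) + r), and AM-GM gives
   sqrt(2 n r L) <= n eps r + L / (2 eps). The lower deviation is the upper
   one for the flipped variables 1 - x_i. *)

Section exponential_bounds.
Context {R : realType}.
Implicit Types x lam : R.

Lemma nondecreasing_series_exp_coeff x : 0 <= x ->
  nondecreasing_seq (series (exp_coeff x)).
Proof.
by move=> x0; apply: nondecreasing_series => j _ _; exact: exp_coeff_ge0.
Qed.

Lemma series_exp_coeff_le_expR x k : 0 <= x -> series (exp_coeff x) k <= expR x.
Proof.
move=> x0; apply: nondecreasing_cvgn_le; last exact: is_cvg_series_exp_coeff.
exact: nondecreasing_series_exp_coeff.
Qed.

Lemma expR_ge_cubic x : 0 <= x -> 1 + x + x ^+ 2 / 2 + x ^+ 3 / 6 <= expR x.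
Proof.
move=> x0; have := series_exp_coeff_le_expR _ 4 x0.
rewrite /series /= !big_nat_recr //= big_nil /exp_coeff /=.
by rewrite !factS /= fact0 expr0 expr1 !divr1 add0r.
Qed.

Lemma expRN_le_quadratic x : 0 <= x -> expR (- x) <= 1 - x + x ^+ 2 / 2.
Proof.
move=> x0; have Q0 : 0 < 1 - x + x ^+ 2 / 2 by nra.
rewrite expRN -[_^-1]mulr1 ler_pdivrMl ?expR_gt0 //.
apply: (le_trans _ (ler_wpM2r (ltW Q0) (expR_ge_cubic x x0))); nra.
Qed.

Lemma exp3_leq_fact k : (2 * 3 ^ k <= k.+2`!)%N.
Proof.
elim: k => [|k IH] //.
by rewrite factS expnS mulnCA leq_mul.
Qed.

Lemma exp_coeff_SS_le x k : 0 <= x -> exp_coeff x k.+2 <= x ^+ 2 / 2 * (x / 3) ^+ k.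
Proof.
move=> x0; have pos : 0 < 2 * 3 ^+ k :> R by rewrite mulr_gt0 // exprn_gt0.
have -> : x ^+ 2 / 2 * (x / 3) ^+ k = x ^+ k.+2 / (2 * 3 ^+ k).
  by rewrite expr_div_n -[k.+2]addn2 exprD; field; rewrite expf_neq0.
rewrite /exp_coeff /= ler_wpM2l ?exprn_ge0 // lef_pV2 ?posrE ?ltr0n ?fact_gt0 //.
by rewrite -(natrX R 3 k) -natrM ler_nat exp3_leq_fact.
Qed.

Lemma expR_le_bernstein_ge0 x lam : 0 <= x <= lam -> lam < 3 ->
  expR x <= 1 + x + x ^+ 2 / (2 * (1 - lam / 3)).
Proof.
move=> /andP[x0 xlam] lam3; set t := lam / 3.
have t0 : 0 <= t by rewrite /t; lra.
have partial k :
    series (exp_coeff x) k.+2 <= 1 + x + series (geometric (x ^+ 2 / 2) t) k.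
  elim: k => [|k IH].
    rewrite /series /= !big_nat_recr //= !big_nil /exp_coeff /=.
    by rewrite expr0 expr1 !divr1 add0r addr0.
  rewrite /series /= big_nat_recr //= [X in _ <= _ + X]big_nat_recr //= addrA.
  apply: lerD; first exact: IH.
  apply: le_trans (exp_coeff_SS_le x k x0) _.
  rewrite ler_wpM2l ?divr_ge0 ?sqr_ge0 // lerXn2r ?nnegrE /t; lra.
have geometric_le k :
    series (geometric (x ^+ 2 / 2) t) k <= x ^+ 2 / (2 * (1 - lam / 3)).
  rewrite geometric_seriesE /=; last by rewrite /t; apply/eqP; lra.
  have -> : x ^+ 2 / (2 * (1 - lam / 3)) = x ^+ 2 / 2 / (1 - t).
    by rewrite /t; field; lra.
  rewrite ler_pM2r ?invr_gt0 /t; last lra.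
  by rewrite ler_piMr ?divr_ge0 ?sqr_ge0 // gerBl exprn_ge0.
rewrite /expR; apply: limr_le; first exact: is_cvg_series_exp_coeff.
apply: nearW => k.
apply: (le_trans (y := series (exp_coeff x) k.+2)).
  by apply: nondecreasing_series_exp_coeff => //; rewrite -addn2 leq_addr.
by apply: le_trans (partial k) _; rewrite lerD2l.
Qed.

Lemma expR_le_bernstein x lam : x <= lam -> 0 <= lam < 3 ->
  expR x <= 1 + x + x ^+ 2 / (2 * (1 - lam / 3)).
Proof.
move=> xlam /andP[lam0 lam3]; have [x0|x0] := leP 0 x.
  by apply: expR_le_bernstein_ge0; rewrite ?x0.
have := expRN_le_quadratic (- x) ltac:(lra).
rewrite opprK sqrrN => /le_trans; apply.
rewrite lerD2l ler_wpM2l ?sqr_ge0 // lef_pV2 ?posrE; lra.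
Qed.

Definition bernstein_psi lam := lam ^+ 2 / (2 * (1 - lam / 3)).

Lemma bernstein_psi_ge0 lam : lam < 3 -> 0 <= bernstein_psi lam.
Proof. by move=> lam3; rewrite divr_ge0 ?sqr_ge0 //; lra. Qed.

Lemma bernoulli_mgf_le p lam : 0 <= p <= 1 -> 0 <= lam < 3 ->
  \sum_(b : bool) bernoulli_pmf p b * expR (lam * ((b : nat)%:R - p))
  <= expR (bernstein_psi lam * (p * (1 - p))).
Proof.
move=> /andP[p0 p1] lam03; have /andP[lam0 lam3] := lam03.
rewrite big_bool /bernoulli_pmf /= /bernstein_psi.
have e1 := @expR_le_bernstein (lam * (1 - p)) lam ltac:(nra) lam03.
have e0 := @expR_le_bernstein (lam * (0 - p)) lam ltac:(nra) lam03.
apply: le_trans (lerD (ler_wpM2l p0 e1) (ler_wpM2l _ e0)) _; first lra.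
apply: le_trans (expR_ge1Dx _).
by rewrite le_eqVlt; apply/orP; left; apply/eqP; field; lra.
Qed.

Lemma chernoff_bernoulli_product n (p : 'I_n -> R) t lam :
  (forall i, 0 <= p i <= 1) -> 0 <= lam < 3 ->
  \sum_(b : {ffun 'I_n -> bool} | t <= \sum_i ((b i : nat)%:R - p i))
     \prod_i bernoulli_pmf (p i) (b i)
  <= expR (- (lam * t) + bernstein_psi lam * \sum_i p i * (1 - p i)).
Proof.
move=> p01 lam03; have /andP[lam0 lam3] := lam03.
pose mgf i (b : bool) := bernoulli_pmf (p i) b * expR (lam * ((b : nat)%:R - p i)).
have pmf0 i b : 0 <= bernoulli_pmf (p i) b by exact: bernoulli_pmf_ge0.
have markov (b : {ffun 'I_n -> bool}) :
    (if t <= \sum_i ((b i : nat)%:R - p i) then \prod_i bernoulli_pmf (p i) (b i)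
     else 0) <= expR (- (lam * t)) * \prod_i mgf i (b i).
  have -> : expR (- (lam * t)) * \prod_i mgf i (b i) = \prod_i bernoulli_pmf (p i) (b i)
      * expR (lam * (\sum_i ((b i : nat)%:R - p i) - t)).
    by rewrite mulrBr addrC expRD mulr_sumr expR_sum big_split /=; ring.
  have prod0 : 0 <= \prod_i bernoulli_pmf (p i) (b i) by exact: prodr_ge0.
  case: ifP => [tle|_]; last by rewrite mulr_ge0 ?expR_ge0.
  rewrite ler_peMr // (le_trans _ (expR_ge1Dx _)) // lerDl mulr_ge0 //; lra.
apply: (le_trans (y := \sum_(b : {ffun 'I_n -> bool})
                       expR (- (lam * t)) * \prod_i mgf i (b i))).
  by rewrite big_mkcond /=; apply: ler_sum => b _; exact: markov.
rewrite -big_distrr /= -bigA_distr_bigA /= expRD ler_wpM2l ?expR_ge0 //.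
rewrite big_distrr /= expR_sum; apply: ler_prod => i _.
rewrite sumr_ge0 => [|b _]; last by rewrite mulr_ge0 ?expR_ge0.
exact: bernoulli_mgf_le.
Qed.

Lemma bernstein_exponent_le {V L s : R} :
  0 < V -> 0 < L -> 0 <= s -> 2 * V * L <= s ^+ 2 ->
  exists2 lam, 0 <= lam < 3 & - (lam * (s + 2 * L / 3)) + bernstein_psi lam * V <= - L.
Proof.
move=> V0 L0 s0 hs; set t := s + 2 * L / 3.
have t0 : 0 < t by rewrite /t; lra.
have D0 : 0 < V + t / 3 by lra.
(* the minimiser of the exponent *)
exists (t / (V + t / 3)).
  by rewrite divr_ge0 ?ltW //= ltr_pdivrMr //; lra.
have -> : - (t / (V + t / 3) * t) + bernstein_psi (t / (V + t / 3)) * V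
    = - (t ^+ 2 / (2 * (V + t / 3))).
  by rewrite /bernstein_psi; field; apply/andP; split; apply/eqP; lra.
rewrite lerN2 ler_pdivlMr; last lra.
have Ls : 0 <= L * s by rewrite mulr_ge0 // ltW.
rewrite /t; nra.
Qed.

End exponential_bounds.

Lemma sum_var_le_var_mean {R : realFieldType} {n} {p : 'I_n -> R} {m : R} :
  \sum_i p i = n%:R * m -> \sum_i p i * (1 - p i) <= n%:R * (m * (1 - m)).
Proof.
move=> hm.
have sum_dev : \sum_i (p i - m) = 0.
  by rewrite sumrB sumr_const card_ord -mulr_natl hm subrr.
have : 0 <= \sum_i (p i - m) ^+ 2 by apply: sumr_ge0 => i _; exact: sqr_ge0.
rewrite (eq_bigr (fun i => m * (1 - m) - p i * (1 - p i) + (1 - 2 * m) * (p i - m)));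
  last by move=> i _; ring.
rewrite big_split /= -mulr_sumr sum_dev mulr0 addr0 sumrB sumr_const card_ord.
by rewrite mulr_natl subr_ge0.
Qed.

Lemma bernoulli_var_le {R : realFieldType} (a q r : R) : 0 <= a <= 1 -> 0 <= q <= 1 ->
  `|q - a| <= r -> a * (1 - a) <= q * (1 - q) + r.
Proof. by move=> /andP[a0 a1] /andP[q0 q1]; rewrite ler_norml => /andP[? ?]; nra. Qed.

Lemma sum_var_le {R : realFieldType} n (p : 'I_n -> R) (q r : R) : (0 < n)%N ->
  (forall i, 0 <= p i <= 1) -> 0 <= q <= 1 -> `|q - n%:R^-1 * \sum_i p i| <= r ->
  \sum_i p i * (1 - p i) <= n%:R * (q * (1 - q) + r).
Proof.
move=> n0 p01 q01; set m := n%:R^-1 * _ => hqm.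
have nR : 0 < n%:R :> R by rewrite ltr0n.
have m0 : 0 <= m.
  by rewrite mulr_ge0 ?invr_ge0 ?ler0n // sumr_ge0 // => i _; case/andP: (p01 i).
have m1 : m <= 1.
  have : \sum_i p i <= \sum_(i < n) 1 by apply: ler_sum => i _; case/andP: (p01 i).
  by rewrite sumr_const card_ord /m mulrC ler_pdivrMr // mul1r.
have hm : \sum_i p i = n%:R * m by rewrite /m mulrA mulfV ?mul1r // gt_eqF.
apply: le_trans (sum_var_le_var_mean hm) _.
by rewrite ler_wpM2l ?ler0n // bernoulli_var_le ?m0.
Qed.

Lemma bernstein_radius {R : rcfType} {N q r eps L : R} :
  0 < N -> 0 <= q <= 1 -> 0 <= r -> 0 < eps -> 0 <= L ->
  exists2 s, 0 <= s /\ 2 * (N * (q * (1 - q) + r)) * L <= s ^+ 2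
    & s + 2 * L / 3 = N * (eps * r + Num.sqrt (2 * q * (1 - q) * L / N)
                           + (2 / 3 + 1 / (2 * eps)) * (L / N)).
Proof.
move=> N0 /andP[q0 q1] r0 eps0 L0.
pose u := N * Num.sqrt (2 * q * (1 - q) * L / N).
pose a := N * eps * r; pose b := L / (2 * eps).
exists (u + a + b); last by rewrite /u /a /b; field; rewrite !gt_eqF.
have u0 : 0 <= u by rewrite mulr_ge0 ?sqrtr_ge0 // ltW.
have ab0 : 0 <= a + b by rewrite addr_ge0 // ?divr_ge0 ?mulr_ge0 // ltW.
have u2 : u ^+ 2 = 2 * N * (q * (1 - q)) * L.
  rewrite exprMn sqr_sqrtr; first by field; rewrite gt_eqF.
  by rewrite divr_ge0 ?(ltW N0) // !mulr_ge0 // subr_ge0.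
have ab2 : 2 * N * r * L <= (a + b) ^+ 2.
  have -> : (a + b) ^+ 2 = 2 * N * r * L + (a - b) ^+ 2.
    by rewrite /a /b; field; rewrite gt_eqF.
  by rewrite lerDl sqr_ge0.
split; first by rewrite -addrA addr_ge0.
have := mulr_ge0 u0 ab0; nra.
Qed.

Lemma mean_sub_lt {R : realFieldType} n (a b : 'I_n -> R) c : (0 < n)%N ->
  (n%:R^-1 * \sum_i a i - n%:R^-1 * \sum_i b i < c) = (\sum_i (a i - b i) < n%:R * c).
Proof. by move=> n0; rewrite -mulrBr -sumrB mulrC ltr_pdivrMr ?ltr0n // mulrC. Qed.

Lemma measure_bigsetU_le {d} {T : ringOfSetsType d} {R : realFieldType}
    (mu : {content set T -> \bar R}) {I : Type} {r : seq I} {Q : pred I}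
    {F : I -> set T} :
  (forall i, Q i -> measurable (F i)) ->
  (mu (\big[setU/set0]_(i <- r | Q i) F i) <= \sum_(i <- r | Q i) mu (F i))%E.
Proof.
move=> mF; elim: r => [|i r IH]; first by rewrite !big_nil measure0.
rewrite !big_cons; case: ifP => Qi //.
apply: le_trans (leeD (lexx _) IH); apply: measureU2; first exact: mF.
exact: bigsetU_measurable.
Qed.

Lemma in_bigsetI {T : Type} {n} {F : 'I_n -> set T} {x} :
  (forall i, F i x) -> (\big[setI/setT]_(i < n) F i) x.
Proof. by move=> Fx; elim/big_ind: _ => // A B Ax Bx; split. Qed.

Lemma sub_bigsetU {T : Type} {I : finType} {Q : pred I} {F : I -> set T} i :
  Q i -> F i `<=` \big[setU/set0]_(j | Q j) F j.
Proof. by move=> Qi; rewrite (bigD1 i) //= => x Fx; left. Qed.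

Section independent_bernoulli.
Local Set Implicit Arguments.
Context {d} {T : measurableType d} {R : realType} (P : probability T R) {n : nat}.

Definition bernoulli_atom (X : 'I_n -> T -> R) (b : {ffun 'I_n -> bool}) : set T :=
  \big[setI/setT]_(i < n) X i @^-1` [set (b i : nat)%:R].

Record indep_bernoulli (X : 'I_n -> T -> R) (p : 'I_n -> R) : Prop := IndepBernoulli {
  indep_bernoulli_measurable : forall i, measurable_fun setT (X i);
  indep_bernoulli_01 : forall i, P [set w | X i w = 0 \/ X i w = 1] = 1%E;
  indep_bernoulli_prob1 : forall i, P (X i @^-1` [set 1]) = (p i)%:E;
  indep_bernoulli_atom : forall b,
    P (bernoulli_atom X b) = (\prod_i P (X i @^-1` [set (b i : nat)%:R]))%E }.

Variables (X : 'I_n -> T -> R) (p : 'I_n -> R).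
Hypothesis XB : indep_bernoulli X p.

Let measurable_preimage i A : measurable A -> measurable (X i @^-1` A).
Proof.
move=> mA; rewrite -[_ @^-1` _]setTI.
exact: (indep_bernoulli_measurable XB i measurableT mA).
Qed.

Lemma indep_bernoulli_pmf i (b : bool) :
  P (X i @^-1` [set (b : nat)%:R]) = (bernoulli_pmf (p i) b)%:E.
Proof.
case: b; first exact: (indep_bernoulli_prob1 XB).
have disj : X i @^-1` [set 0] `&` X i @^-1` [set 1] = set0.
  by apply/seteqP; split => w // [/= ->]; lra.
have total : (P (X i @^-1` [set 0%R]) + P (X i @^-1` [set 1%R]) = 1)%E.
  rewrite -(measureU P (measurable_preimage i (measurable_set1 0))
    (measurable_preimage i (measurable_set1 1)) disj).
  exact: (indep_bernoulli_01 XB i).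
rewrite (indep_bernoulli_prob1 XB) in total.
by rewrite /bernoulli_pmf /= EFinB -total addeK.
Qed.

Lemma indep_bernoulli_param i : 0 <= p i <= 1.
Proof.
have pmf_ge0 b : (0 <= (bernoulli_pmf (p i) b)%:E)%E.
  by rewrite -indep_bernoulli_pmf; exact: measure_ge0.
have := pmf_ge0 false; have := pmf_ge0 true.
by rewrite !lee_fin /bernoulli_pmf /= subr_ge0 => -> ->.
Qed.

Lemma indep_bernoulli_flip : indep_bernoulli (fun i w => 1 - X i w) (fun i => 1 - p i).
Proof.
have flip i (b : bool) : (fun w => 1 - X i w) @^-1` [set (b : nat)%:R]
    = X i @^-1` [set (~~ b : nat)%:R].
  by case: b; apply/seteqP; split => w /= h; lra.
split.
- move=> i; apply: measurable_funB; first exact: measurable_cst.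
  exact: (indep_bernoulli_measurable XB).
- move=> i; rewrite -(indep_bernoulli_01 XB i); congr (P _).
  by apply/seteqP; split => w /= [] h; [right | left | right | left]; lra.
- by move=> i; exact: (etrans (congr1 P (flip i true)) (indep_bernoulli_pmf i false)).
- move=> b; have -> : bernoulli_atom (fun i w => 1 - X i w) b
      = bernoulli_atom X [ffun i => ~~ b i].
    by apply: eq_bigr => i _; rewrite ffunE flip.
  by rewrite (indep_bernoulli_atom XB); apply: eq_bigr => i _; rewrite ffunE flip.
Qed.

Lemma measurable_sum_ge t : measurable [set w | t <= \sum_i (X i w - p i)].
Proof.
have mf : measurable_fun setT (fun w => \sum_i (X i w - p i)).
  apply: measurable_sum => i; apply: measurable_funB; last exact: measurable_cst.
  exact: (indep_bernoulli_measurable XB).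
rewrite (_ : [set w | _] = (fun w => \sum_i (X i w - p i)) @^-1` `[t, +oo[).
  by rewrite -[_ @^-1` _]setTI; apply: mf => //; exact: measurable_itv.
by apply/seteqP; split => w /=; rewrite in_itv /= andbT.
Qed.

Lemma sum_ge_sub_atoms t :
  [set w | t <= \sum_i (X i w - p i)]
  `<=` \big[setU/set0]_(b : {ffun 'I_n -> bool} | t <= \sum_i ((b i : nat)%:R - p i))
         bernoulli_atom X b
       `|` \big[setU/set0]_i ~` [set w | X i w = 0 \/ X i w = 1].
Proof.
move=> w tle.
have [X01|/existsNP[i notX01]] := pselect (forall i, X i w = 0 \/ X i w = 1).
  left; pose b := [ffun i => X i w == 1].
  have Xb i : X i w = (b i : nat)%:R.
    by rewrite ffunE; case: (X01 i) => ->; rewrite ?eqxx // eq_sym oner_eq0.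
  apply: (sub_bigsetU b); last exact: in_bigsetI.
  by under eq_bigr do rewrite -Xb.
by right; apply: (sub_bigsetU i).
Qed.

Lemma indep_bernoulli_tail_le_atoms (t : R) :
  (P [set w | t <= \sum_i (X i w - p i)]%R
   <= (\sum_(b : {ffun 'I_n -> bool} | t <= \sum_i ((b i : nat)%:R - p i))
         \prod_i bernoulli_pmf (p i) (b i))%:E)%E.
Proof.
pose U0 := \big[setU/set0]_i ~` [set w | X i w = 0 \/ X i w = 1].
pose U := \big[setU/set0]_(b : {ffun 'I_n -> bool} | t <= \sum_i ((b i : nat)%:R - p i))
  bernoulli_atom X b.
have m01 i : measurable [set w | X i w = 0 \/ X i w = 1].
  rewrite (_ : [set w | _] = X i @^-1` [set 0] `|` X i @^-1` [set 1]) //.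
  by apply: measurableU; apply: measurable_preimage; exact: measurable_set1.
have matom b : measurable (bernoulli_atom X b).
  by apply: bigsetI_measurable => i _; apply: measurable_preimage; exact: measurable_set1.
have mU0 : measurable U0 by apply: bigsetU_measurable => i _; exact/measurableC.
have mU : measurable U by exact: bigsetU_measurable.
have PU0 : P U0 = 0%E.
  have null i : P (~` [set w | X i w = 0 \/ X i w = 1]) = 0%E.
    by rewrite probability_setC ?(m01 i) // (indep_bernoulli_01 XB) subee.
  apply/eqP; rewrite eq_le measure_ge0 andbT.
  apply: le_trans (measure_bigsetU_le P (fun i _ => measurableC (m01 i))) _.
  by rewrite big1 // => i _; exact: null.
apply: (le_trans (y := P (U `|` U0))).
  apply: le_measure (sum_ge_sub_atoms t); rewrite inE.
    exact: measurable_sum_ge.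
  exact: (measurableU _ _ mU mU0).
have -> : P (U `|` U0) = P U by exact: measureU0.
have sub_add : (P U <= \sum_(b : {ffun 'I_n -> bool}
                              | (t <= \sum_i ((b i : nat)%:R - p i))%R)
                        P (bernoulli_atom X b))%E.
  exact: measure_bigsetU_le.
apply: le_trans sub_add _; rewrite -sumEFin lee_sum // => b _.
rewrite (indep_bernoulli_atom XB) -prodEFin.
by under eq_bigr do rewrite indep_bernoulli_pmf.
Qed.

Lemma indep_bernoulli_chernoff (t lam : R) : 0 <= lam < 3 ->
  (P [set w | t <= \sum_i (X i w - p i)]%R
   <= (expR (- (lam * t) + bernstein_psi lam * \sum_i p i * (1 - p i)))%:E)%E.
Proof.
move=> lam03; apply: le_trans (indep_bernoulli_tail_le_atoms t) _.
by rewrite lee_fin chernoff_bernoulli_product // => i; exact: indep_bernoulli_param.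
Qed.

Lemma indep_bernoulli_bernstein (L V s : R) : 0 < L -> 0 < V ->
  \sum_i p i * (1 - p i) <= V -> 0 <= s -> 2 * V * L <= s ^+ 2 ->
  ((1 - expR (- L))%:E <= P [set w | \sum_i (X i w - p i) < s + 2 * L / 3]%R)%E.
Proof.
move=> L0 V0 hV s0 hs; have [lam lam03 hlam] := bernstein_exponent_le V0 L0 s0 hs.
set t := s + 2 * L / 3 in hlam *.
rewrite (_ : [set w | _] = ~` [set w | t <= \sum_i (X i w - p i)]); last first.
  by apply/seteqP; split => w /=; rewrite ltNge => /negP.
rewrite probability_setC; last exact: measurable_sum_ge.
rewrite EFinB leeB //.
apply: le_trans (indep_bernoulli_chernoff _ _ lam03) _; rewrite lee_fin ler_expR.
apply: le_trans hlam; rewrite lerD2l ler_wpM2l // bernstein_psi_ge0 //.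
by case/andP: lam03.
Qed.

End independent_bernoulli.

Section bernoulli_random_variables.
Context {d} {T : measurableType d} {R : realType} (P : probability T R).

Lemma bernoulli_rv_expectation (Y : {RV P >-> R}) :
  bernoulli_rv Y -> 'E_P[Y]%E = P (Y @^-1` [set 1]).
Proof.
move=> hY; set A1 := Y @^-1` [set 1].
have mA1 : measurable A1 by apply: measurable_funPTI; exact: measurable_set1.
have m01 : measurable [set w | Y w = 0 \/ Y w = 1].
  rewrite (_ : [set w | _] = Y @^-1` [set 0] `|` A1) //.
  by apply: measurableU => //; apply: measurable_funPTI; exact: measurable_set1.
rewrite unlock -[in RHS](setIT A1) -integral_indic //.
apply: ae_eq_integral => //.
- by apply/measurable_EFinP; exact: measurable_funPT.
- by apply/measurable_EFinP; exact: measurable_indic.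
have null : P (~` [set w | Y w = 0 \/ Y w = 1]) = 0.
  by rewrite probability_setC // hY subee.
exists (~` [set w | Y w = 0 \/ Y w = 1]); split; [exact: measurableC | exact: null |].
move=> w /= notY01 Y01; apply: notY01 => _; rewrite indicE.
case: Y01 => Yw; rewrite Yw.
  by rewrite memNset //= /A1 /= Yw => /esym/eqP; rewrite oner_eq0.
by rewrite mem_set.
Qed.

Lemma indep_bernoulli_rv n (X : 'I_n -> {RV P >-> R}) :
  (forall i, bernoulli_rv (X i)) -> mutually_independent X ->
  indep_bernoulli P (fun i => X i : T -> R) (fun i => fine 'E_P[X i]).
Proof.
move=> hX hind; split => [i|i|i|b].
- exact: measurable_funPT.
- exact: hX.
- by rewrite bernoulli_rv_expectation // fineK // fin_num_measure.
- by apply: hind => i; exact: measurable_set1.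
Qed.

End bernoulli_random_variables.

Theorem lemma2 (d : measure_display) (T : measurableType d) (R : realType)
  (P : probability T R) (n : nat) (hn : (0 < n)%N)
  (X : 'I_n -> {RV P >-> R})
  (hbern : forall i, bernoulli_rv (X i))
  (hindep : mutually_independent X)
  (r eps delta q : R) (hr : 0 < r) (heps : 0 < eps)
  (hdelta0 : 0 < delta) (hdelta1 : delta < 1)
  (hq0 : 0 <= q) (hq1 : q <= 1) :
  let p := fun i => fine ('E_P[X i]) in
  let pbar := n%:R^-1 * \sum_(i < n) p i in
  let xbar := fun w => n%:R^-1 * \sum_(i < n) X i w in
  let bound := eps * r
      + Num.sqrt (2 * q * (1 - q) * ln delta^-1 / n%:R)
      + (2 / 3 + 1 / (2 * eps)) * (ln delta^-1 / n%:R) in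
  `|q - pbar| <= r ->
  ((1 - delta)%:E <= P [set w | (xbar w - pbar < bound)%R])%E /\
  ((1 - delta)%:E <= P [set w | (pbar - xbar w < bound)%R])%E.
Proof.
move=> p pbar xbar bound hqp.
have XB : indep_bernoulli P (fun i => X i : T -> R) p by exact: indep_bernoulli_rv.
have q01 : 0 <= q <= 1 by rewrite hq0 hq1.
set L := ln delta^-1; have L0 : 0 < L by rewrite ln_gt0 // invf_gt1.
set V := n%:R * (q * (1 - q) + r).
have V0 : 0 < V by rewrite mulr_gt0 ?ltr0n //; nra.
have hV : \sum_i p i * (1 - p i) <= V.
  by apply: sum_var_le => // i; exact: indep_bernoulli_param XB i.
have n0 : 0 < n%:R :> R by rewrite ltr0n.
have [s [s0 hs] sE] := bernstein_radius n0 q01 (ltW hr) heps (ltW L0).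
have tail Y pY : indep_bernoulli P Y pY -> \sum_i pY i * (1 - pY i) <= V ->
    ((1 - delta)%:E <= P [set w | \sum_i (Y i w - pY i) < n%:R * bound]%R)%E.
  have eL : expR (- L) = delta by rewrite /L lnV ?posrE // opprK lnK // posrE.
  move=> YB hVY; rewrite -eL /bound -/L -sE.
  exact: indep_bernoulli_bernstein YB _ _ _ L0 V0 hVY s0 hs.
split.
  rewrite (_ : [set w | _] = [set w | \sum_i (X i w - p i) < n%:R * bound]%R).
    exact: tail.
  by apply/seteqP; split => w; rewrite /= mean_sub_lt.
rewrite (_ : [set w | _] = [set w | \sum_i ((1 - X i w) - (1 - p i)) < n%:R * bound]%R).
  apply: tail; first exact: indep_bernoulli_flip.
  by rewrite (eq_bigr (fun i => p i * (1 - p i))) // => i _; ring.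
have flip_sum w : \sum_i (p i - X i w) = \sum_i ((1 - X i w) - (1 - p i)).
  by apply: eq_bigr => i _; ring.
by apply/seteqP; split => w; rewrite /= mean_sub_lt // flip_sum.
Qed.
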